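(* If $S$ is an idempotent semiring satisfying $x\approx xyx+x+xyx$, then $S$ satisfies $xyzx\approx xzyx+xyzx+xzyx$.
   Context: An idempotent semiring is an algebra $(S,+,\cdot)$ with two binary operations such that $(S,+)$ and $(S,\cdot)$ are bands (associative, with $x+x=x$ and $xx=x$), and both distributive laws $x(y+z)=xy+xz$ and $(x+y)z=xz+yz$ hold; addition is not assumed commutative. *)

(* An idempotent semiring: (S,+) and (S,.) are bands (associative and
   idempotent), and both distributive laws hold.  Addition is NOT assumed
   commutative. *)
Record idempotent_semiring (S : Type) (add mul : S -> S -> S) : Prop := {
  add_assoc : forall x y z, add x (add y z) = add (add x y) z;
  add_idem  : forall x, add x x = x;
  mul_assoc : forall x y z, mul x (mul y z) = mul (mul x y) z;
  mul_idem  : forall x, mul x x = x;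
  mul_add_l : forall x y z, mul x (add y z) = add (mul x y) (mul x z);
  mul_add_r : forall x y z, mul (add x y) z = add (mul x z) (mul y z)
}.

(* Put a = xyzx and b = xzyx.  Multiplying the identity for the pair (x, zy)
   by yzx on the right, and by xyz on the left, gives a = ba + a + ba and
   a = ab + a + ab, where the band laws turn the outer products into ba and ab.
   In the band (S, .), a and b have the same content, so bab = b; hence
   ba = b(ab + a + ab) = b + ba + b.  Substituting this into a = ba + a + ba
   shows that a starts and ends with the summand b, so b + a = a = a + b. *)

From Stdlib Require Import List.
Import ListNotations.

Section BandWords.

Context {S : Type} {mul : S -> S -> S}.
Hypothesis mulA : forall x y z, mul x (mul y z) = mul (mul x y) z.
Hypothesis mulxx : forall x, mul x x = x.

(* [word x [y1; ...; yn]] is the left-associated product x y1 ... yn, so that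
   the products in the theorem are words up to conversion. *)
Definition word (x : S) (l : list S) : S := fold_left mul l x.

Lemma word_mul_l (x y : S) (l : list S) : word (mul y x) l = mul y (word x l).
Proof.
  revert x. induction l as [|u l IH]; intros x; simpl; [reflexivity|].
  unfold word in IH. rewrite <- mulA. apply IH.
Qed.

Lemma word_app (x : S) (l m : list S) : word x (l ++ m) = word (word x l) m.
Proof. apply fold_left_app. Qed.

Lemma word_cat (x y : S) (l m : list S) :
  mul (word x l) (word y m) = word x (l ++ y :: m).
Proof. rewrite word_app. symmetry. apply word_mul_l. Qed.

Lemma word_square_head (x : S) (w s : list S) :
  word x (w ++ x :: w ++ s) = word x (w ++ s).
Proof.
  rewrite app_comm_cons, app_assoc, word_app, <- word_cat, mulxx, word_app.
  reflexivity.
Qed.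

Lemma word_square (x u : S) (p w s : list S) :
  word x (p ++ u :: w ++ u :: w ++ s) = word x (p ++ u :: w ++ s).
Proof.
  rewrite !word_app.
  change (word (mul (word x p) u) (w ++ u :: w ++ s)
          = word (mul (word x p) u) (w ++ s)).
  rewrite !word_mul_l, word_square_head. reflexivity.
Qed.

Lemma word_cat_overlap (x u : S) (l m : list S) :
  mul (word x (l ++ [u])) (word u m) = word x (l ++ u :: m).
Proof.
  rewrite word_cat, <- app_assoc.
  exact (word_square x u l [] m).
Qed.

Lemma word_xzyx_xyzx_xzyx (x y z : S) :
  mul (mul (word x [z; y; x]) (word x [y; z; x])) (word x [z; y; x])
  = word x [z; y; x].
Proof.
  transitivity (word x [z; y; x; y; z; x; z; y; x]).
  { etransitivity; [|exact (word_cat_overlap x x [z; y; x; y; z] [z; y; x])].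
    f_equal. exact (word_cat_overlap x x [z; y] [y; z; x]). }
  transitivity (word x [z; x; z; y; x; y; z; x; z; y; x]).
  { symmetry. exact (word_square_head x [z] [y; x; y; z; x; z; y; x]). }
  transitivity (word x [z; x; z; y; z; x; z; y; x; y; z; x; z; y; x]).
  { symmetry. exact (word_square x z [] [x; z; y] [x; y; z; x; z; y; x]). }
  transitivity (word x [z; x; z; y; z; x; z; y; x]).
  { exact (word_square x y [z; x; z] [z; x; z; y; x] []). }
  transitivity (word x [z; x; z; y; x]).
  { exact (word_square x z [] [x; z; y] [x]). }
  exact (word_square_head x [z] [y; x]).
Qed.

End BandWords.

Arguments word {S} mul x l.

Section IdempotentSemiring.

Context {S : Type} {add mul : S -> S -> S}.
Hypothesis HS : idempotent_semiring S add mul.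

Lemma add_sandwich_of_mul_sandwich (a b : S) :
  a = add (add (mul b a) a) (mul b a) ->
  a = add (add (mul a b) a) (mul a b) ->
  mul (mul b a) b = b ->
  a = add (add b a) b.
Proof.
  intros Hba Hab Hbab.
  pose proof (add_assoc _ _ _ HS) as addA.
  assert (Eba : mul b a = add (add b (mul b a)) b).
  { rewrite Hab at 1. rewrite !(mul_add_l _ _ _ HS), (mul_assoc _ _ _ HS), Hbab.
    reflexivity. }
  set (ba := mul b a) in *.
  assert (Ea : a = add (add b (add (add (add (add ba b) a) b) ba)) b).
  { rewrite Hba at 1. rewrite Eba at 1 2. rewrite !addA. reflexivity. }
  set (X := add (add (add (add ba b) a) b) ba) in Ea.
  assert (Hbl : add b a = a).
  { rewrite Ea at 1. rewrite !addA, (add_idem _ _ _ HS). symmetry. exact Ea. }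
  assert (Hbr : add a b = a).
  { rewrite Ea at 1. rewrite <- addA, (add_idem _ _ _ HS). symmetry. exact Ea. }
  rewrite Hbl. symmetry. exact Hbr.
Qed.

End IdempotentSemiring.

Theorem lemma4p6 (S : Type) (add mul : S -> S -> S)
  (HS : idempotent_semiring S add mul)
  (Hid : forall x y : S,
      x = add (add (mul (mul x y) x) x) (mul (mul x y) x)) :
  forall x y z : S,
    mul (mul (mul x y) z) x =
    add (add (mul (mul (mul x z) y) x) (mul (mul (mul x y) z) x))
        (mul (mul (mul x z) y) x).
Proof.
  intros x y z.
  pose proof (mul_assoc _ _ _ HS) as mulA.
  pose proof (mul_idem _ _ _ HS) as mulxx.
  change (word mul x [y; z; x] =
          add (add (word mul x [z; y; x]) (word mul x [y; z; x]))
              (word mul x [z; y; x])).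
  assert (Hx : x = add (add (word mul x [z; y; x]) x) (word mul x [z; y; x])).
  { pose proof (Hid x (mul z y)) as H. rewrite mulA in H. exact H. }
  apply (add_sandwich_of_mul_sandwich HS).
  - assert (Eba : mul (word mul x [z; y; x]) (word mul x [y; z; x])
                  = mul (word mul x [z; y; x]) (word mul y [z; x])).
    { etransitivity; [exact (word_cat_overlap mulA mulxx x x [z; y] [y; z; x])|].
      symmetry. exact (word_cat mulA x y [z; y; x] [z; x]). }
    pose proof (f_equal (fun t => mul t (word mul y [z; x])) Hx) as E.
    cbv beta in E. rewrite !(mul_add_r _ _ _ HS), <- (word_mul_l mulA) in E.
    rewrite Eba. exact E.
  - assert (Eab : mul (word mul x [y; z; x]) (word mul x [z; y; x])
                  = mul (word mul x [y; z]) (word mul x [z; y; x])).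
    { etransitivity; [exact (word_cat_overlap mulA mulxx x x [y; z] [z; y; x])|].
      symmetry. exact (word_cat mulA x x [y; z] [z; y; x]). }
    pose proof (f_equal (mul (word mul x [y; z])) Hx) as E.
    rewrite !(mul_add_l _ _ _ HS) in E.
    rewrite Eab. exact E.
  - exact (word_xzyx_xyzx_xzyx mulA mulxx x y z).
Qed.
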